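(* Let $T=\begin{pmatrix} A_1 & \cdots & A_N\\ B_1&\cdots&B_N\end{pmatrix}$ be a complex matrix partitioned into $2\times N$ blocks such that every block $A_k$ and $B_k$ has rank $1$, and let $p>0$. Then $\|T\|_p\le\|\mathcal C_p(T)\|_p$ if $p\ge 2$, and $\|T\|_p\ge\|\mathcal C_p(T)\|_p$ if $0<p\le 2$.
   Context: For a matrix $X$ and $r>0$, $\|X\|_r=(\operatorname{Tr}|X|^r)^{1/r}$ with $|X|=(X^*X)^{1/2}$ (a norm for $r\ge1$, a quasi-norm for $0<r<1$). In a $2\times N$ partitioned block matrix all blocks in a block row have the same number of rows and all blocks in a block column have the same number of columns. The norm compression is the $2\times N$ real matrix $\mathcal C_p(T)=\begin{pmatrix} \|A_1\|_p & \cdots & \|A_N\|_p\\ \|B_1\|_p&\cdots&\|B_N\|_p\end{pmatrix}$. *)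

From HB Require Import structures.
From mathcomp Require Import all_boot all_order all_algebra.
From mathcomp Require Import complex.
From mathcomp Require Import reals exp.
Set Implicit Arguments. Unset Strict Implicit. Unset Printing Implicit Defensive.
Import Order.TTheory GRing.Theory Num.Theory.
Local Open Scope ring_scope.

Definition adjmx (R : realType) (m n : nat) (X : 'M[R[i]]_(m, n)) : 'M[R[i]]_(n, m) :=
  (map_mx (@conjc R) X)^T.

(* The eigenvalues (with algebraic multiplicity) of a square complex matrix:
   the roots of its characteristic polynomial, which splits over R[i]. *)
Definition eigenvalues (R : realType) (n : nat) (M : 'M[R[i]]_n) : seq R[i] :=
  sval (closed_field_poly_normal (char_poly M)).

(* Tr |X|^r, where |X| = (X^* X)^{1/2}: the eigenvalues of the positive semidefinite
   matrix X^* X are nonnegative reals lambda_i, those of |X|^r are lambda_i^{r/2}. *)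
Definition trace_abs_pow (R : realType) (m n : nat) (r : R) (X : 'M[R[i]]_(m, n)) : R :=
  \sum_(z <- eigenvalues (adjmx X *m X)) (complex.Re z) `^ (r / 2).

Definition schatten (R : realType) (m n : nat) (r : R) (X : 'M[R[i]]_(m, n)) : R :=
  (trace_abs_pow r X) `^ (r^-1).

Definition block2N (R : realType) (m1 m2 N : nat) (n : 'I_N -> nat)
  (A : forall k : 'I_N, 'M[R[i]]_(m1, n k)) (B : forall k : 'I_N, 'M[R[i]]_(m2, n k))
  : 'M[R[i]]_(m1 + m2, \sum_(k < N) n k) :=
  col_mx (\mxrow_k A k) (\mxrow_k B k).

Definition norm_compression (R : realType) (p : R) (m1 m2 N : nat) (n : 'I_N -> nat)
  (A : forall k : 'I_N, 'M[R[i]]_(m1, n k)) (B : forall k : 'I_N, 'M[R[i]]_(m2, n k))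
  : 'M[R[i]]_(2, N) :=
  \matrix_(i < 2, k < N) ((if i == 0 :> nat then schatten p (A k) else schatten p (B k)) +i* 0)%C.

(* Write lambda_i for the eigenvalues of T^*T and nu_j for those of F^*F, where F is the
   2 x N matrix of the Frobenius norms of the blocks; F = C_p(T) because a rank-one matrix
   has a single nonzero singular value, so all its Schatten norms agree.  Since F has two
   rows, at most two nu_j are nonzero, and sum_i lambda_i = |T|_F^2 = |F|_F^2 = sum_j nu_j.
   Moreover every lambda_i is at most max_j nu_j: for a unit vector w cut into blocks z_k,
   the triangle inequality gives |Tw|^2 <= (sum_k |A_k| |z_k|)^2 + (sum_k |B_k| |z_k|)^2
   = |F rho|^2 with rho = (|z_k|)_k, again a unit vector.  So lambda is majorized by the
   two-point vector (nu_1, nu_2), and for f convex with f 0 = 0 (f = t^(p/2), p >= 2, or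
   f = -t^(p/2), p <= 2) we get sum_i f lambda_i <= f nu_1 + f nu_2: f lies below its
   piecewise-linear interpolant at 0, nu_2, nu_1, and the mass of lambda above nu_2 is at
   most nu_1 - nu_2. *)

From HB Require Import structures.
From mathcomp Require Import all_boot all_order all_algebra.
From mathcomp Require Import complex.
From mathcomp Require Import reals exp.
From mathcomp Require Import classical_sets interval_inference convex hoelder.
From mathcomp Require Import spectral.
From mathcomp Require Import ring lra.
Set Implicit Arguments. Unset Strict Implicit. Unset Printing Implicit Defensive.
Import Order.TTheory GRing.Theory Num.Theory.
Local Open Scope ring_scope.
Local Open Scope complex_scope.
Import ComplexField.Normc.

Section ConvexOnNneg.
Variable R : realType.

Definition convex_on_nneg (f : R -> R) := forall a b w, 0 <= a -> 0 <= b -> 0 <= w <= 1 ->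
  f (w * a + (1 - w) * b) <= w * f a + (1 - w) * f b.

Lemma convex_on_nneg_powR q : 1 <= q -> convex_on_nneg (fun x => x `^ q).
Proof.
move=> q1 a b w a0 b0 /andP[w0 w1].
have := @convex_powR R q q1 (Itv01 w0 w1) a b.
by rewrite !in_setE /= !in_itv /= !andbT !convRE; apply.
Qed.

Lemma convex_on_nneg_opp_powR q : 0 < q -> q <= 1 -> convex_on_nneg (fun x => - x `^ q).
Proof.
move=> q0 q1 a b w a0 b0 /andP[w0 w1]; rewrite !mulrN -opprD lerN2.
have powRK x : 0 <= x -> (x `^ q) `^ q^-1 = x.
  by move=> x0; rewrite -powRrM mulfV ?gt_eqF // powRr1.
have iq1 : 1 <= q^-1 by rewrite invf_ge1.
have := convex_on_nneg_powR iq1 (powR_ge0 a q) (powR_ge0 b q) (introT andP (conj w0 w1)).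
have s0 : 0 <= w * a `^ q + (1 - w) * b `^ q.
  by rewrite addr_ge0 // mulr_ge0 ?powR_ge0 ?subr_ge0.
rewrite /= !powRK // => h; have := ge0_ler_powR (ltW q0) _ _ h.
rewrite -powRrM mulVf ?gt_eqF // powRr1 //; apply; rewrite nnegrE ?powR_ge0 //.
by rewrite addr_ge0 // mulr_ge0 ?subr_ge0.
Qed.

End ConvexOnNneg.

Lemma sum_excess_le (R : realType) (I : finType) (lam : I -> R) (m1 m2 : R) :
  (forall i, 0 <= lam i <= m1) -> \sum_i lam i = m1 + m2 -> 0 <= m2 <= m1 ->
  \sum_i Num.max 0 (lam i - m2) <= m1 - m2.
Proof.
move=> lam_bnd lam_sum /andP[m2_ge0 m21].
set S := [pred i | m2 < lam i].
have -> : \sum_i Num.max 0 (lam i - m2) = \sum_(i in S) (lam i - m2).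
  rewrite [RHS]big_mkcond /=; apply: eq_bigr => i _; rewrite inE.
  case: ltP => h; first by apply/max_idPr; rewrite subr_ge0 ltW.
  by apply/max_idPl; rewrite subr_le0.
have le_k : \sum_(i in S) lam i <= #|S|%:R * m1.
  by rewrite mulr_natl -sumr_const; apply: ler_sum => i _; case/andP: (lam_bnd i).
have le_sum : \sum_(i in S) lam i <= m1 + m2.
  rewrite -lam_sum [leRHS](bigID [pred i | i \in S]) /= lerDl sumr_ge0 // => i _.
  by case/andP: (lam_bnd i).
rewrite sumrB sumr_const -mulr_natl.
case: #|S| le_k => [|[|k]] le_k; rewrite ?mul0r ?mul1r; try lra.
have k_ge0 : 0 <= k%:R :> R by [].
rewrite -addn2 natrD in le_k *; nra.
Qed.

Lemma sum_comp_supp_le1 (R : nmodType) (I : finType) (P : pred I) (g : I -> R) (h : R -> R) :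
  h 0 = 0 -> (#|[pred j | P j & g j != 0%R]| <= 1)%N ->
  \sum_(j | P j) h (g j) = h (\sum_(j | P j) g j).
Proof.
move=> h0 /card_le1_eqP g_supp.
have [j /andP[Pj gj] | g0] := pickP [pred j | P j & g j != 0]; last first.
  have gP0 j : P j -> g j = 0 by move=> Pj; have /= := g0 j; rewrite Pj => /negbFE/eqP.
  rewrite [in RHS]big1 // h0; apply: big1 => j /gP0 ->; exact: h0.
have only_j j' : P j' -> j' != j -> g j' = 0.
  move=> Pj' nej; apply/eqP; apply: contraNT nej => gj'.
  by apply/eqP; apply: g_supp; rewrite inE /= ?Pj ?Pj' ?gj ?gj'.
rewrite !(bigD1 j Pj) /= !big1 ?addr0 // => j' /andP[Pj' nej]; rewrite only_j //.
Qed.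

Section TwoPointMajorization.
Variables (R : realType) (f : R -> R).
Hypotheses (f0 : f 0 = 0) (f_convex : convex_on_nneg f).

Lemma convex_secant a t b : 0 <= a -> a <= t <= b ->
  f t <= f a + (f b - f a) / (b - a) * (t - a).
Proof.
move=> a_ge0 /andP[le_at le_tb]; have [eq_ab | ab] := eqVneq a b.
  rewrite -eq_ab in le_tb *.
  have -> : t = a by apply: le_anti; rewrite le_tb le_at.
  by rewrite !subrr mulr0 addr0.
have ba : b - a != 0 by rewrite subr_eq0 eq_sym.
pose w := (b - t) / (b - a).
have w01 : 0 <= w <= 1.
  rewrite divr_ge0 ?subr_ge0 // ?(le_trans le_at le_tb) //=.
  by rewrite ler_pdivrMr ?mul1r ?lerD2l ?lerN2 // subr_gt0 lt_neqAle ab (le_trans le_at le_tb).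
have tE : t = w * a + (1 - w) * b by rewrite /w; field.
have -> : f a + (f b - f a) / (b - a) * (t - a) = w * f a + (1 - w) * f b
  by rewrite /w; field.
by rewrite {1}tE; apply: f_convex; rewrite // (le_trans a_ge0 (le_trans le_at le_tb)).
Qed.

Lemma convex_secant0 t m : 0 <= t <= m -> f t <= f m / m * t.
Proof. by move=> tm; have := convex_secant (lexx 0) tm; rewrite f0 !subr0 add0r. Qed.

(* The piecewise-linear interpolant of [f] at [0], [m2] and [m1]. *)
Lemma convex_two_slope_majorant m1 m2 : 0 <= m2 <= m1 ->
  exists s c, [/\ s <= c, s * m2 = f m2, s * m2 + c * (m1 - m2) = f m1 &
    forall t, 0 <= t <= m1 -> f t <= s * t + (c - s) * Num.max 0 (t - m2)].
Proof.
move=> /andP[]; rewrite le_eqVlt => /orP[/eqP m2_0 m1_ge0 | m2_gt0].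
  exists (f m1 / m1), (f m1 / m1); split => [||| t tm]; rewrite -?m2_0 ?mulr0 ?f0 //.
    rewrite add0r subr0; have [-> | m1_neq0] := eqVneq m1 0; first by rewrite f0 mulr0.
    by rewrite divfK.
  by rewrite subrr mul0r addr0 convex_secant0.
pose s := f m2 / m2.
have sm2 : s * m2 = f m2 by rewrite divfK ?gt_eqF.
have below_s t : 0 <= t <= m2 -> f t <= s * t by apply: convex_secant0.
rewrite le_eqVlt => /orP[/eqP m12 | m12].
  exists s, s; split => [||| t tm] //; first by rewrite -m12 subrr mulr0 addr0.
  by rewrite subrr mul0r addr0 below_s // m12.
pose c := (f m1 - f m2) / (m1 - m2).
exists s, c; split => [|//||t /andP[t_ge0 tm1]].
- have := convex_secant0 (m := m1) (t := m2); rewrite (ltW m2_gt0) (ltW m12) => /(_ isT).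
  rewrite mulrAC ler_pdivlMr; last exact: lt_trans m2_gt0 m12.
  move=> le_m2.
  rewrite /s /c ler_pdivrMr // mulrAC ler_pdivlMr ?subr_gt0 //.
  by rewrite mulrBr mulrBl lerD2r.
- by rewrite sm2 /c divfK ?subr_eq0 ?gt_eqF // addrC subrK.
have [t_le | t_gt] := leP t m2.
  rewrite (_ : Num.max 0 (t - m2) = 0) ?mulr0 ?addr0 ?below_s ?t_ge0 //.
  by apply/max_idPl; rewrite subr_le0.
rewrite (_ : Num.max 0 (t - m2) = t - m2); last by apply/max_idPr; rewrite subr_ge0 ltW.
have -> : s * t + (c - s) * (t - m2) = f m2 + c * (t - m2) by rewrite -sm2; ring.
by apply: convex_secant; rewrite ?(ltW m2_gt0) ?(ltW t_gt).
Qed.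

Lemma sum_convex_le_two_point (I : finType) (lam : I -> R) m1 m2 :
  (forall i, 0 <= lam i <= m1) -> \sum_i lam i = m1 + m2 -> 0 <= m2 <= m1 ->
  \sum_i f (lam i) <= f m1 + f m2.
Proof.
move=> lam_bnd lam_sum m12.
have [s [c [sc sm2 sm1 f_le]]] := convex_two_slope_majorant m12.
apply: (le_trans (ler_sum _ (fun i _ => f_le _ (lam_bnd i)))).
rewrite big_split /= -!mulr_sumr lam_sum.
apply: (le_trans (lerD (lexx _) (ler_wpM2l _ (sum_excess_le lam_bnd lam_sum m12)))).
  by rewrite subr_ge0.
suff -> : s * (m1 + m2) + (c - s) * (m1 - m2) = f m1 + f m2 by [].
by rewrite -sm1 -sm2; ring.
Qed.

Lemma sum_convex_majorized (I J : finType) (lam : I -> R) (nu : J -> R) :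
  (forall i, 0 <= lam i) -> (forall j, 0 <= nu j) -> \sum_i lam i = \sum_j nu j ->
  (forall i, lam i <= \big[Num.max/0]_j nu j) -> (#|[pred j | nu j != 0%R]| <= 2)%N ->
  \sum_i f (lam i) <= \sum_j f (nu j).
Proof.
move=> lam_ge0 nu_ge0 sum_eq lam_le nu_supp.
have [j0 _ | J0] := pickP (@predT J); last first.
  move: lam_le; rewrite big_pred0 // => lam_le.
  rewrite [X in _ <= X]big_pred0 // big1 // => i _.
  have -> : lam i = 0 by apply/le_anti; rewrite lam_ge0 lam_le.
  exact: f0.
have [jm _ max_nu] := @eq_bigmax _ _ _ 0 j0 predT nu isT (fun j _ => nu_ge0 j).
rewrite max_nu in lam_le.
set m1 := nu jm in lam_le; set m2 := \sum_(j | j != jm) nu j.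
have m1_ge0 : 0 <= m1 := nu_ge0 jm.
have nu_le j : nu j <= m1 by rewrite /m1 -max_nu; apply: le_bigmax.
have supp1 : (#|[pred j | j != jm & nu j != 0%R]| <= 1)%N.
  have [m1_0 | m1_neq0] := eqVneq m1 0.
    rewrite eq_card0 // => j; rewrite !inE.
    have -> : nu j = 0 by apply/le_anti; rewrite nu_ge0 andbT -m1_0.
    by rewrite eqxx andbF.
  move: nu_supp; rewrite (cardD1 jm) inE m1_neq0 add1n ltnS; apply: leq_trans.
  by apply: eq_leq; apply: eq_card => j; rewrite !inE.
have m2_le : m2 <= m1.
  (* truncation at [m1] fixes every [nu j] and commutes with a one-term sum *)
  have := sum_comp_supp_le1 (h := fun x => Num.min x m1) (min_l m1_ge0) supp1.
  rewrite (eq_bigr nu) => [e|j _]; last exact: min_l.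
  by rewrite /m2 e ge_min lexx orbT.
have nu_sum : \sum_j f (nu j) = f m1 + f m2.
  by rewrite (bigD1 jm) //= (sum_comp_supp_le1 f0 supp1).
rewrite nu_sum; apply: sum_convex_le_two_point => [i||]; first by rewrite lam_ge0 lam_le.
  by rewrite sum_eq (bigD1 jm).
by rewrite sumr_ge0.
Qed.
End TwoPointMajorization.

Section PowRMajorized.
Variables (R : realType) (I J : finType) (lam : I -> R) (nu : J -> R).
Hypotheses (lam_ge0 : forall i, 0 <= lam i) (nu_ge0 : forall j, 0 <= nu j).
Hypotheses (sum_eq : \sum_i lam i = \sum_j nu j)
  (lam_le : forall i, lam i <= \big[Num.max/0]_j nu j)
  (nu_supp : (#|[pred j | nu j != 0%R]| <= 2)%N).

Lemma sum_powR_le_majorized q : 1 <= q -> \sum_i lam i `^ q <= \sum_j nu j `^ q.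
Proof.
move=> q1; apply: (sum_convex_majorized _ (convex_on_nneg_powR q1)) => //.
by rewrite powR0 // gt_eqF // (lt_le_trans ltr01 q1).
Qed.

Lemma sum_powR_ge_majorized q : 0 < q -> q <= 1 -> \sum_j nu j `^ q <= \sum_i lam i `^ q.
Proof.
move=> q0 q1; rewrite -lerN2 -!sumrN.
apply: (sum_convex_majorized _ (convex_on_nneg_opp_powR q0 q1)) => //.
by rewrite powR0 ?oppr0 // gt_eqF.
Qed.

End PowRMajorized.

Section Frobenius.
Variable R : realType.
Local Notation C := R[i].
Implicit Types (m n p : nat).

Lemma adjmxE m n (X : 'M[C]_(m, n)) i j : adjmx X i j = (X j i)^*.
Proof. by rewrite !mxE. Qed.

Lemma adjmxK m n (X : 'M[C]_(m, n)) : adjmx (adjmx X) = X.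
Proof. by apply/matrixP => i j; rewrite !adjmxE conjcK. Qed.

Lemma adjmx_mul m n p (X : 'M[C]_(m, n)) (Y : 'M[C]_(n, p)) :
  adjmx (X *m Y) = adjmx Y *m adjmx X.
Proof.
apply/matrixP => i j; rewrite adjmxE !mxE rmorph_sum /=.
by apply: eq_bigr => k _; rewrite !adjmxE rmorphM mulrC.
Qed.

Lemma adjmx_trmxC m n (X : 'M[C]_(m, n)) : adjmx X = (X ^t*)%sesqui.
Proof. by apply/matrixP => i j; rewrite !mxE. Qed.

Lemma adjmx_col_mx m1 m2 n (U : 'M[C]_(m1, n)) (V : 'M[C]_(m2, n)) :
  adjmx (col_mx U V) = row_mx (adjmx U) (adjmx V).
Proof. by rewrite /adjmx map_col_mx tr_col_mx. Qed.

Lemma adjmx_mxrow m N (n : 'I_N -> nat) (X : forall k, 'M[C]_(m, n k)) :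
  adjmx (\mxrow_k X k) = \mxcol_k adjmx (X k).
Proof. by apply/matrixP => i j; rewrite !mxE. Qed.

Lemma adjmx_mxcol m N (n : 'I_N -> nat) (X : forall k, 'M[C]_(n k, m)) :
  adjmx (\mxcol_k X k) = \mxrow_k adjmx (X k).
Proof. by apply/matrixP => i j; rewrite !mxE. Qed.

Lemma normr_normc (z : C) : `|z| = (normc z)%:C.
Proof. by case: z => a b; rewrite normc_def. Qed.

Lemma normc_ge0 (z : C) : 0 <= normc z.
Proof. by case: z => a b; apply: sqrtr_ge0. Qed.

Lemma conjc_mul_normc (z : C) : z^* * z = (normc z ^+ 2)%:C.
Proof. by rewrite mulrC -sqr_normc normr_normc -rmorphXn. Qed.

Lemma normc_sum (I : finType) (F : I -> C) : normc (\sum_i F i) <= \sum_i normc (F i).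
Proof.
apply: (big_ind2 (fun z r => normc z <= r)) => [|z r y s hz hy|//]; first by rewrite normc0.
exact: le_trans (le_normcD _ _) (lerD hz hy).
Qed.

Lemma sqr_normcD_le (x y : C) : normc (x + y) ^+ 2 <= (normc x + normc y) ^+ 2.
Proof. by rewrite ler_sqr ?nnegrE ?addr_ge0 ?normc_ge0 ?le_normcD. Qed.

Lemma sum_CauchySchwarz (I : finType) (a b : I -> R) :
  (\sum_i a i * b i) ^+ 2 <= (\sum_i a i ^+ 2) * (\sum_i b i ^+ 2).
Proof.
have dbl (u v : I -> R) : (\sum_i u i) * (\sum_j v j) = \sum_i \sum_j u i * v j.
  by rewrite mulr_suml; apply: eq_bigr => i _; rewrite mulr_sumr.
have : 0 <= \sum_i \sum_j (a i * b j - a j * b i) ^+ 2.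
  by rewrite sumr_ge0 // => i _; rewrite sumr_ge0 // => j _; apply: sqr_ge0.
have -> : \sum_i \sum_j (a i * b j - a j * b i) ^+ 2 =
    \sum_i \sum_j a i ^+ 2 * b j ^+ 2 + \sum_j \sum_i a i ^+ 2 * b j ^+ 2
    - 2 * \sum_i \sum_j (a i * b i) * (a j * b j).
  rewrite exchange_big mulr_sumr -big_split -sumrB /=; apply: eq_bigr => i _.
  by rewrite mulr_sumr -big_split -sumrB /=; apply: eq_bigr => j _; ring.
rewrite -!dbl exchange_big /= -dbl expr2; lra.
Qed.

Lemma sum_CauchySchwarz_sqrt (I : finType) (a b : I -> R) :
  \sum_i a i * b i <= Num.sqrt (\sum_i a i ^+ 2) * Num.sqrt (\sum_i b i ^+ 2).
Proof.
rewrite -sqrtrM ?sumr_ge0 // => [|i _]; last exact: sqr_ge0.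
apply: le_trans (ler_norm _) _.
by rewrite -sqrtr_sqr ler_sqrt ?sum_CauchySchwarz // mulr_ge0 // sumr_ge0 // => i _; apply: sqr_ge0.
Qed.

Definition frob2 m n (X : 'M[C]_(m, n)) : R := \sum_i \sum_j normc (X i j) ^+ 2.
Definition frob m n (X : 'M[C]_(m, n)) : R := Num.sqrt (frob2 X).

Lemma frob2_ge0 m n (X : 'M[C]_(m, n)) : 0 <= frob2 X.
Proof. by rewrite sumr_ge0 // => i _; rewrite sumr_ge0 // => j _; apply: sqr_ge0. Qed.

Lemma frob_ge0 m n (X : 'M[C]_(m, n)) : 0 <= frob X.
Proof. exact: sqrtr_ge0. Qed.

Lemma sqr_frob m n (X : 'M[C]_(m, n)) : frob X ^+ 2 = frob2 X.
Proof. by rewrite sqr_sqrtr // frob2_ge0. Qed.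

Lemma frob2_pair m n (X : 'M[C]_(m, n)) :
  frob2 X = \sum_(ij : 'I_m * 'I_n) normc (X ij.1 ij.2) ^+ 2.
Proof. exact: pair_bigA. Qed.

Lemma frob2_cV n (v : 'cV[C]_n) : frob2 v = \sum_i normc (v i 0) ^+ 2.
Proof. by apply: eq_bigr => i _; rewrite big_ord1. Qed.

Lemma gram_diag_entry m n (X : 'M[C]_(m, n)) j :
  (adjmx X *m X) j j = (frob2 (col j X))%:C.
Proof.
rewrite mxE rmorph_sum; apply: eq_bigr => i _.
by rewrite adjmxE conjc_mul_normc big_ord1 mxE.
Qed.

Lemma frob2_trace m n (X : 'M[C]_(m, n)) : (frob2 X)%:C = \tr (adjmx X *m X).
Proof.
rewrite /mxtrace /frob2 exchange_big rmorph_sum; apply: eq_bigr => j _.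
by rewrite gram_diag_entry frob2_cV; congr (_%:C); apply: eq_bigr => i _; rewrite mxE.
Qed.

Lemma frob2_adjmx m n (X : 'M[C]_(m, n)) : frob2 (adjmx X) = frob2 X.
Proof. by apply: complexI; rewrite !frob2_trace adjmxK mxtrace_mulC. Qed.

Lemma frob2_col_mx m1 m2 n (U : 'M[C]_(m1, n)) (V : 'M[C]_(m2, n)) :
  frob2 (col_mx U V) = frob2 U + frob2 V.
Proof.
apply: complexI; rewrite frob2_trace adjmx_col_mx mul_row_col mxtraceD -!frob2_trace.
by rewrite rmorphD.
Qed.

Lemma frob2_mxcol m N (n : 'I_N -> nat) (X : forall k, 'M[C]_(n k, m)) :
  frob2 (\mxcol_k X k) = \sum_k frob2 (X k).
Proof.
apply: complexI; rewrite frob2_trace adjmx_mxcol mul_mxrow_mxcol raddf_sum rmorph_sum.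
by apply: eq_bigr => k _; exact: esym (frob2_trace _).
Qed.

Lemma frob2_mxrow m N (n : 'I_N -> nat) (X : forall k, 'M[C]_(m, n k)) :
  frob2 (\mxrow_k X k) = \sum_k frob2 (X k).
Proof.
rewrite -frob2_adjmx adjmx_mxrow frob2_mxcol.
by apply: eq_bigr => k _; rewrite frob2_adjmx.
Qed.

Lemma frob2_unitary_mul m n p (Q : 'M[C]_(m, n)) (Y : 'M[C]_(n, p)) :
  adjmx Q *m Q = 1%:M -> frob2 (Q *m Y) = frob2 Y.
Proof.
move=> QQ; apply: complexI; rewrite !frob2_trace adjmx_mul.
by rewrite -mulmxA (mulmxA (adjmx Q)) QQ mul1mx.
Qed.

Lemma frobD m n (X Y : 'M[C]_(m, n)) : frob (X + Y) <= frob X + frob Y.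
Proof.
rewrite -ler_sqr ?nnegrE ?addr_ge0 ?frob_ge0 // sqrrD !sqr_frob !frob2_pair.
have XY_le : \sum_(ij : 'I_m * 'I_n) normc (X ij.1 ij.2) * normc (Y ij.1 ij.2)
    <= frob X * frob Y.
  by rewrite /frob !frob2_pair; apply: sum_CauchySchwarz_sqrt.
under eq_bigr do rewrite mxE.
apply: le_trans (ler_sum _ (fun ij _ => sqr_normcD_le _ _)) _.
under eq_bigr do rewrite sqrrD.
by rewrite !big_split /= lerD2r lerD2l mulr2n lerD.
Qed.

Lemma frob0 m n : frob (0 : 'M[C]_(m, n)) = 0.
Proof.
rewrite /frob /frob2 big1 ?sqrtr0 // => i _; rewrite big1 // => j _.
by rewrite mxE normc0 expr0n.
Qed.

Lemma frob_sum m n (I : finType) (Y : I -> 'M[C]_(m, n)) :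
  frob (\sum_k Y k) <= \sum_k frob (Y k).
Proof.
apply: (big_ind2 (fun Z r => frob Z <= r)) => [|Z r Z' r' hZ hZ'|//]; first by rewrite frob0.
exact: le_trans (frobD _ _) (lerD hZ hZ').
Qed.

Lemma frob2_mulmx m n p (X : 'M[C]_(m, n)) (Y : 'M[C]_(n, p)) :
  frob2 (X *m Y) <= frob2 X * frob2 Y.
Proof.
rewrite /frob2 mulr_suml; apply: ler_sum => i _.
rewrite [X in _ * X]exchange_big /= mulr_sumr; apply: ler_sum => j _; rewrite mxE.
apply: le_trans (sum_CauchySchwarz (fun k => normc (X i k)) (fun k => normc (Y k j))).
rewrite ler_sqr ?nnegrE ?normc_ge0 ?sumr_ge0 // => [|k _]; last first.
  by rewrite mulr_ge0 ?normc_ge0.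
by apply: le_trans (normc_sum _) _; apply: ler_sum => k _; rewrite normcM.
Qed.

Lemma frob_mulmx m n p (X : 'M[C]_(m, n)) (Y : 'M[C]_(n, p)) :
  frob (X *m Y) <= frob X * frob Y.
Proof. by rewrite -sqrtrM ?frob2_ge0 // ler_sqrt ?mulr_ge0 ?frob2_ge0 ?frob2_mulmx. Qed.

End Frobenius.

Section DiagonalMatrices.
Variable F : fieldType.

Lemma char_poly_mulmx_conj n (Q P D : 'M[F]_n) : Q *m P = 1%:M ->
  char_poly (Q *m D *m P) = char_poly D.
Proof.
move=> QP; rewrite /char_poly.
set Q' := map_mx polyC Q; set P' := map_mx polyC P.
have QP' : Q' *m P' = 1%:M by rewrite -map_mxM QP map_mx1.
have -> : char_poly_mx (Q *m D *m P) = Q' *m char_poly_mx D *m P'.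
  rewrite /char_poly_mx !map_mxM mulmxBr mulmxBl -/Q' -/P'.
  by congr (_ - _); rewrite mul_mx_scalar -scalemxAl QP' scalemx1.
by rewrite !det_mulmx mulrC mulrA -det_mulmx (mulmx1C QP') det1 mul1r.
Qed.

Lemma card_diag_neq0_le_rank n (d : 'rV[F]_n) :
  (#|[pred i | d ord0 i != 0%R]| <= \rank (diag_mx d))%N.
Proof.
set A := [pred i | d ord0 i != 0%R].
pose e (a : 'I_#|A|) := enum_val a.
have d_e a : d 0 (e a) != 0 by have := enum_valP a.
pose M : 'M[F]_(#|A|, n) := \matrix_(a, j) (if j == e a then (d 0 j)^-1 else 0).
pose N : 'M[F]_(n, #|A|) := \matrix_(j, a) (j == e a)%:R.
apply: (@mulmx1_min_rank _ _ _ _ _ M N); apply/matrixP => a b.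
rewrite mul_mx_diag !mxE (bigD1 (e b)) //= big1 => [|j /negbTE nej]; last first.
  by rewrite !mxE nej mulr0.
rewrite !mxE eqxx mulr1 addr0; have [eab | neab] := eqVneq (e b) (e a).
  by rewrite (enum_val_inj eab) eqxx mulVf.
by rewrite mul0r (_ : a == b = false) //; apply: contraNF neab => /eqP ->.
Qed.

End DiagonalMatrices.

Section SingularValues.
Variable R : realType.
Local Notation C := R[i].
Variables (m n : nat) (X : 'M[C]_(m, n)).

Local Notation H := (adjmx X *m X).
Local Notation P := (spectralmx H).

(* The columns of [gram_basis] are orthonormal eigenvectors of X^* X, and [sval2 i] is the
   eigenvalue of the i-th one: the square of the i-th singular value of X. *)
Definition gram_basis : 'M[C]_n := adjmx P.
Definition sval2 (i : 'I_n) : R := frob2 (X *m col i gram_basis).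

Lemma spectralmx_adjmx : P *m adjmx P = 1%:M.
Proof. by rewrite [adjmx P]adjmx_trmxC; apply/unitarymxP/spectral_unitarymx. Qed.

Lemma invmx_spectralmx : invmx P = adjmx P.
Proof. by rewrite [adjmx P]adjmx_trmxC invmx_unitary ?spectral_unitarymx. Qed.

Lemma gram_basis_unitary : adjmx gram_basis *m gram_basis = 1%:M.
Proof. by rewrite adjmxK spectralmx_adjmx. Qed.

Lemma gram_basis_unitaryT : gram_basis *m adjmx gram_basis = 1%:M.
Proof. by rewrite adjmxK /gram_basis -invmx_spectralmx mulVmx ?spectral_unit. Qed.

Lemma gram_basis_diag :
  adjmx (X *m gram_basis) *m (X *m gram_basis) = diag_mx (spectral_diag H).
Proof.
have /orthomx_spectralP HE : H \is normalmx.
  by apply/normalmxP; rewrite -!adjmx_trmxC adjmx_mul adjmxK.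
rewrite adjmx_mul !mulmxA -(mulmxA _ _ X) [in LHS]HE /gram_basis adjmxK -invmx_spectralmx.
by rewrite !mulmxA mulmxV ?spectral_unit // mul1mx mulmxK ?spectral_unit.
Qed.

Lemma spectral_diag_gram i : spectral_diag H 0 i = (sval2 i)%:C.
Proof.
have /matrixP/(_ i i) := gram_basis_diag.
by rewrite gram_diag_entry mxE eqxx mulr1n colE -mulmxA -colE => <-.
Qed.

Lemma sval2_ge0 i : 0 <= sval2 i.
Proof. exact: frob2_ge0. Qed.

Lemma frob2_gram_col i : frob2 (col i gram_basis) = 1.
Proof.
by apply: complexI; rewrite -gram_diag_entry gram_basis_unitary mxE eqxx.
Qed.

Lemma diag_mx_gram : diag_mx (spectral_diag H) = diag_mx (\row_i (sval2 i)%:C).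
Proof. by congr diag_mx; apply/rowP => i; rewrite mxE spectral_diag_gram. Qed.

Lemma sum_sval2 : \sum_i sval2 i = frob2 X.
Proof.
apply: complexI; rewrite rmorph_sum /=.
under eq_bigr do rewrite -spectral_diag_gram.
rewrite -mxtrace_diag -gram_basis_diag -frob2_trace -frob2_adjmx adjmx_mul.
by rewrite frob2_unitary_mul ?frob2_adjmx // adjmxK gram_basis_unitaryT.
Qed.

Lemma eigenvalues_gram :
  perm_eq (eigenvalues H) [seq (sval2 i)%:C | i <- enum 'I_n].
Proof.
rewrite /eigenvalues; case: closed_field_poly_normal => s /= charH.
rewrite (monicP (char_poly_monic _)) scale1r in charH.
have H_conj : H = gram_basis *m diag_mx (spectral_diag H) *m adjmx gram_basis.
  by rewrite -gram_basis_diag adjmx_mul !mulmxA gram_basis_unitaryT mul1mx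
    -mulmxA gram_basis_unitaryT mulmx1.
apply: prod_XsubC_eq; rewrite -charH {1}H_conj char_poly_mulmx_conj ?gram_basis_unitaryT //.
rewrite diag_mx_gram char_poly_trig ?diag_mx_is_trig // big_map big_enum /=.
by apply: eq_bigr => i _; rewrite !mxE eqxx mulr1n.
Qed.

Lemma frob2_mul_le_sval2 M (v : 'cV[C]_n) :
  (forall i, sval2 i <= M) -> frob2 (X *m v) <= M * frob2 v.
Proof.
move=> sval2_le; set u := adjmx gram_basis *m v.
have vE : v = gram_basis *m u by rewrite /u mulmxA gram_basis_unitaryT mul1mx.
have fu : frob2 u = frob2 v by rewrite frob2_unitary_mul // adjmxK gram_basis_unitaryT.
clearbody u.
have fXv : frob2 (X *m v) = \sum_i sval2 i * normc (u i 0) ^+ 2.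
  apply: complexI; rewrite vE mulmxA frob2_trace adjmx_mul -mulmxA (mulmxA (adjmx (X *m gram_basis))).
  rewrite gram_basis_diag diag_mx_gram mul_diag_mx.
  rewrite /mxtrace big_ord1 mxE rmorph_sum; apply: eq_bigr => i _.
  by rewrite !mxE mulrCA conjc_mul_normc -rmorphM.
rewrite fXv -fu frob2_cV mulr_sumr; apply: ler_sum => i _.
by rewrite ler_wpM2r ?sqr_ge0.
Qed.

Lemma card_sval2_neq0 : (#|[pred i | sval2 i != 0%R]| <= \rank X)%N.
Proof.
have -> : #|[pred i | sval2 i != 0%R]| = #|[pred i | (\row_i (sval2 i)%:C) ord0 i != 0%R]|.
  by apply: eq_card => i; rewrite !inE mxE (inj_eq (@complexI R)).
apply: (leq_trans (card_diag_neq0_le_rank _)).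
rewrite -diag_mx_gram -gram_basis_diag.
exact: leq_trans (mxrankM_maxr _ _) (mxrankM_maxl _ _).
Qed.

End SingularValues.

Section SchattenNorms.
Variables (R : realType) (m n : nat) (X : 'M[R[i]]_(m, n)).

Lemma trace_abs_pow_sval2 (r : R) : trace_abs_pow r X = \sum_i sval2 X i `^ (r / 2).
Proof. by rewrite /trace_abs_pow (perm_big _ (eigenvalues_gram X)) big_map big_enum. Qed.

Lemma schatten_rank_le1 p : (\rank X <= 1)%N -> 0 < p -> schatten p X = frob X.
Proof.
move=> rX p0; rewrite /schatten trace_abs_pow_sval2.
have p2_neq0 : p / 2 != 0 by rewrite mulf_neq0 ?gt_eqF ?invr_gt0.
rewrite (sum_comp_supp_le1 (h := fun x => x `^ (p / 2))) ?powR0 //; last first.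
  apply: leq_trans rX; apply: leq_trans (card_sval2_neq0 X).
  by apply: eq_leq; apply: eq_card => i; rewrite !inE.
rewrite sum_sval2 -powRrM /frob -powR12_sqrt ?frob2_ge0 //; congr (_ `^ _).
by field; rewrite gt_eqF.
Qed.

End SchattenNorms.

Lemma normc_real_sqr (R : realType) (x : R) : normc (x%:C) ^+ 2 = x ^+ 2.
Proof. by rewrite /= expr0n addr0 sqr_sqrtr ?sqr_ge0. Qed.

Section NormCompression.
Variables (R : realType) (m1 m2 N : nat) (n : 'I_N -> nat).
Variables (A : forall k, 'M[R[i]]_(m1, n k)) (B : forall k, 'M[R[i]]_(m2, n k)).

Definition frob_compression : 'M[R[i]]_(2, N) :=
  \matrix_(i < 2, k < N) (if i == 0 :> nat then frob (A k) else frob (B k))%:C.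

Lemma norm_compression_rank_le1 p :
  (forall k, \rank (A k) <= 1)%N -> (forall k, \rank (B k) <= 1)%N -> 0 < p ->
  norm_compression p A B = frob_compression.
Proof. by move=> rA rB p0; apply/matrixP => i k; rewrite !mxE !schatten_rank_le1. Qed.

Lemma frob2_frob_compression : frob2 frob_compression = frob2 (block2N A B).
Proof.
rewrite /block2N frob2_col_mx !frob2_mxrow -big_split /frob2 big_ord_recl big_ord1.
rewrite -big_split; apply: eq_bigr => k _ /=.
by rewrite !mxE /= !normc_real_sqr !sqr_frob.
Qed.

Lemma frob2_mxrow_mul_le m (Y : forall k, 'M[R[i]]_(m, n k)) (w : 'cV[R[i]]_(\sum_k n k)) :
  frob2 (\mxrow_k Y k *m w) <= (\sum_k frob (Y k) * frob (submxcol w k)) ^+ 2.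
Proof.
rewrite -[w in X in X <= _]submxcolK mul_mxrow_mxcol -sqr_frob.
rewrite ler_sqr ?nnegrE ?frob_ge0 ?sumr_ge0 // => [|k _]; last by rewrite mulr_ge0 ?frob_ge0.
by apply: le_trans (frob_sum _) _; apply: ler_sum => k _; apply: frob_mulmx.
Qed.

Lemma frob2_block2N_mul_le (w : 'cV[R[i]]_(\sum_k n k)) :
  frob2 (block2N A B *m w) <=
  frob2 (frob_compression *m \col_k (frob (submxcol w k))%:C).
Proof.
set rho := \col_k _.
have entry (i : 'I_2) (Y : forall k, 'M[R[i]]_(_, n k)) :
    (forall k, frob_compression i k = (frob (Y k))%:C) ->
    normc ((frob_compression *m rho) i 0) ^+ 2 = (\sum_k frob (Y k) * frob (submxcol w k)) ^+ 2.
  move=> FY; rewrite mxE -normc_real_sqr rmorph_sum; congr (normc _ ^+ 2).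
  by apply: eq_bigr => k _; rewrite FY mxE rmorphM.
rewrite mul_col_mx frob2_col_mx [X in _ <= X]frob2_cV big_ord_recl big_ord1.
rewrite (entry _ _ A) ?(entry _ _ B) ?lerD ?frob2_mxrow_mul_le // => k; by rewrite mxE.
Qed.

Lemma frob2_col_frob_submxcol (w : 'cV[R[i]]_(\sum_k n k)) :
  frob2 (\col_k (frob (submxcol w k))%:C) = frob2 w.
Proof.
rewrite frob2_cV -[w in RHS]submxcolK frob2_mxcol.
by apply: eq_bigr => k _; rewrite mxE normc_real_sqr sqr_frob.
Qed.

Lemma sval2_block2N_le i :
  sval2 (block2N A B) i <= \big[Num.max/0]_j sval2 frob_compression j.
Proof.
apply: le_trans (frob2_block2N_mul_le _) _.
rewrite -[leRHS]mulr1 -(frob2_gram_col (block2N A B) i) -frob2_col_frob_submxcol.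
by apply: frob2_mul_le_sval2 => j; apply: le_bigmax.
Qed.

End NormCompression.

Theorem mainTheorem3 (R : realType) (m1 m2 N : nat) (n : 'I_N -> nat)
  (A : forall k : 'I_N, 'M[R[i]]_(m1, n k)) (B : forall k : 'I_N, 'M[R[i]]_(m2, n k))
  (p : R) :
  (forall k, \rank (A k) = 1%N) -> (forall k, \rank (B k) = 1%N) ->
  0 < p ->
  (2 <= p -> schatten p (block2N A B) <= schatten p (norm_compression p A B)) /\
  (p <= 2 -> schatten p (norm_compression p A B) <= schatten p (block2N A B)).
Proof.
move=> rA rB p0.
rewrite norm_compression_rank_le1 // => [|k|k]; rewrite ?rA ?rB //.
set T := block2N A B; set F := frob_compression A B.
have sum_eq : \sum_i sval2 T i = \sum_j sval2 F j by rewrite !sum_sval2 frob2_frob_compression.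
have F_supp := leq_trans (card_sval2_neq0 F) (rank_leq_row F).
have lam_le := sval2_block2N_le A B.
have root_le x y : x <= y -> 0 <= x -> x `^ p^-1 <= y `^ p^-1.
  by move=> xy x0; apply: ge0_ler_powR; rewrite ?nnegrE ?invr_ge0 ?(ltW p0) ?(le_trans x0).
rewrite /schatten !trace_abs_pow_sval2; split => hp; apply: root_le.
- by apply: sum_powR_le_majorized => //; [exact: sval2_ge0 | exact: sval2_ge0 | lra].
- by rewrite sumr_ge0 // => i _; apply: powR_ge0.
- by apply: sum_powR_ge_majorized => //; [exact: sval2_ge0 | exact: sval2_ge0 | lra | lra].
- by rewrite sumr_ge0 // => i _; apply: powR_ge0.
Qed.
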